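(* For any natural number $n \geq 1$, $\{\omega^n, (\omega^n)^\star\} \leq_c \{\omega^{2n}, (\omega^{2n})^\star\}$.
   Context: Structures have domains contained in $\omega$. For countable structures $\mathcal{A},\mathcal{B}$, the class $\{\mathcal{A},\mathcal{B}\}$ denotes the class of all structures (with domain $\subseteq\omega$) isomorphic to $\mathcal{A}$ or to $\mathcal{B}$. Linear orders are in the language $\{<\}$; $L^\star$ is the reverse of a linear order $L$; $\omega^n$ denotes ordinal exponentiation (as an order type). An enumeration operator $\Gamma$ is a c.e. set of pairs $(\alpha,\varphi)$ with $\alpha$ a finite set of basic (atomic or negated atomic) sentences of the input language with constants from $\omega$ and $\varphi$ a basic sentence of the output language with constants from $\omega$; $\Gamma(X)=\{\varphi : (\alpha,\varphi)\in\Gamma,\ \alpha\subseteq X\}$. $\Gamma$ is a computable embedding of $\mathcal{K}_0$ into $\mathcal{K}_1$ ($\mathcal{K}_0\leq_c\mathcal{K}_1$) if for every $\mathcal{A}\in\mathcal{K}_0$, $\Gamma$ applied to the atomic diagram of $\mathcal{A}$ is the atomic diagram of a structure $\Gamma(\mathcal{A})\in\mathcal{K}_1$, and for all $\mathcal{A},\mathcal{B}\in\mathcal{K}_0$, $\mathcal{A}\cong\mathcal{B}$ iff $\Gamma(\mathcal{A})\cong\Gamma(\mathcal{B})$. *)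

From Stdlib Require Import Arith List.
Import ListNotations.

Inductive prf : Type :=
| PZero : prf
| PSucc : prf
| PProj : nat -> prf                (* i-th argument (0 if absent) *)
| PComp : prf -> list prf -> prf
| PPrec : prf -> prf -> prf
| PMu   : prf -> prf.

Inductive eval : prf -> list nat -> nat -> Prop :=
| ev_zero v : eval PZero v 0
| ev_succ v : eval PSucc v (S (hd 0 v))
| ev_proj i v : eval (PProj i) v (nth i v 0)
| ev_comp f gs v ws y : evals gs v ws -> eval f ws y -> eval (PComp f gs) v y
| ev_prec0 f g v y : eval f v y -> eval (PPrec f g) (0 :: v) y
| ev_precS f g n v z y :
    eval (PPrec f g) (n :: v) z -> eval g (n :: z :: v) y ->
    eval (PPrec f g) (S n :: v) y
| ev_mu f v n :
    eval f (n :: v) 0 ->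
    (forall m, m < n -> exists k, eval f (m :: v) (S k)) ->
    eval (PMu f) v n
with evals : list prf -> list nat -> list nat -> Prop :=
| evs_nil v : evals [] v []
| evs_cons g gs v w ws : eval g v w -> evals gs v ws -> evals (g :: gs) v (w :: ws).

(** [halts e x]: program [e] converges on input [x].
    A set of naturals is c.e. iff it is [halts e] for some [e]. *)
Definition halts (e : prf) (x : nat) : Prop := exists y, eval e [x] y.

Definition npair (a b : nat) : nat := (a + b) * (a + b + 1) / 2 + b.

(** Basic sentences of the language {<} with constants from omega *)
Inductive atom : Type :=
| ALt : nat -> nat -> atom
| AEq : nat -> nat -> atom.

Inductive basic : Type :=
| Pos : atom -> basic
| Neg : atom -> basic.

Definition code_atom (a : atom) : nat :=
  match a with ALt x y => npair 0 (npair x y) | AEq x y => npair 1 (npair x y) end.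
Definition code_basic (b : basic) : nat :=
  match b with Pos a => npair 0 (code_atom a) | Neg a => npair 1 (code_atom a) end.
Fixpoint code_list (l : list basic) : nat :=
  match l with [] => 0 | b :: l' => S (npair (code_basic b) (code_list l')) end.

(** * Enumeration operators
    The operator given by program [e] is the c.e. set of pairs (alpha, phi)
    (alpha a finite set of basic sentences, presented as a list) whose codes
    are accepted by [e]. *)
Definition enum_apply (e : prf) (X : basic -> Prop) : basic -> Prop :=
  fun phi => exists alpha : list basic,
    halts e (npair (code_list alpha) (code_basic phi)) /\
    (forall psi, In psi alpha -> X psi).

(** * Structures in the language {<} with domain contained in omega *)
Record structure : Type := Struct { dom : nat -> Prop ; rel : nat -> nat -> Prop }.

Definition atom_consts (a : atom) : list nat :=
  match a with ALt x y => [x; y] | AEq x y => [x; y] end.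

Definition atom_holds (S : structure) (a : atom) : Prop :=
  match a with ALt x y => rel S x y | AEq x y => x = y end.

Definition diagram (S : structure) (phi : basic) : Prop :=
  match phi with
  | Pos a => (forall c, In c (atom_consts a) -> dom S c) /\ atom_holds S a
  | Neg a => (forall c, In c (atom_consts a) -> dom S c) /\ ~ atom_holds S a
  end.

Definition struct_iso (S T : structure) : Prop :=
  exists f : nat -> nat,
    (forall x, dom S x -> dom T (f x)) /\
    (forall x y, dom S x -> dom S y -> f x = f y -> x = y) /\
    (forall z, dom T z -> exists x, dom S x /\ f x = z) /\
    (forall x y, dom S x -> dom S y -> (rel S x y <-> rel T (f x) (f y))).

Definition iso_to (S : structure) (T : Type) (R : T -> T -> Prop) : Prop :=
  exists f : nat -> T,
    (forall x y, dom S x -> dom S y -> f x = f y -> x = y) /\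
    (forall t, exists x, dom S x /\ f x = t) /\
    (forall x y, dom S x -> dom S y -> (rel S x y <-> R (f x) (f y))).

(** The ordinal omega^n: n-tuples of naturals in lexicographic order, first
    coordinate most significant. *)
Fixpoint lexlt (l m : list nat) : Prop :=
  match l, m with
  | a :: l', b :: m' => a < b \/ (a = b /\ lexlt l' m')
  | _, _ => False
  end.

Definition omega_pow (n : nat) : Type := { l : list nat | length l = n }.
Definition omega_pow_lt (n : nat) (x y : omega_pow n) : Prop := lexlt (proj1_sig x) (proj1_sig y).
Definition omega_pow_rev_lt (n : nat) (x y : omega_pow n) : Prop := omega_pow_lt n y x.

Definition class_omega_pow (n : nat) (S : structure) : Prop :=
  iso_to S (omega_pow n) (omega_pow_lt n) \/ iso_to S (omega_pow n) (omega_pow_rev_lt n).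

Definition computable_embedding (e : prf) (K0 K1 : structure -> Prop) : Prop :=
  (forall A, K0 A -> exists B, K1 B /\
       (forall phi, enum_apply e (diagram A) phi <-> diagram B phi)) /\
  (forall A B A' B', K0 A -> K0 B ->
       (forall phi, enum_apply e (diagram A) phi <-> diagram A' phi) ->
       (forall phi, enum_apply e (diagram B) phi <-> diagram B' phi) ->
       (struct_iso A B <-> struct_iso A' B')).

Definition comp_reducible (K0 K1 : structure -> Prop) : Prop :=
  exists e : prf, computable_embedding e K0 K1.

From Stdlib Require Import Arith List Lia Eqdep_dec IndefiniteDescription Wf_nat.
Import ListNotations.

(* The embedding sends A to its lexicographic square A x A, with pairs coded by
   Cantor pairing.  It is uniform: every basic sentence about pairs follows from
   finitely many basic sentences about their components according to seven rule
   schemes, and the enumeration operator lists the instances of these schemes.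
   The square of omega^n is omega^(2n) and the square of (omega^n)^* is
   (omega^(2n))^*.  Inside either class, two structures are isomorphic iff both or
   neither have a least element (omega^k has one, its reverse has none for k >= 1),
   and A x A has a least element iff A has; so squaring preserves and reflects
   isomorphism. *)

(** * Cantor pairing *)

Fixpoint tri (k : nat) : nat := match k with 0 => 0 | S k' => tri k' + S k' end.

Lemma tri_twice k : k * (k + 1) = tri k * 2.
Proof. induction k; simpl; lia. Qed.

Lemma npair_tri a b : npair a b = tri (a + b) + b.
Proof. unfold npair. rewrite tri_twice, Nat.div_mul by lia. reflexivity. Qed.

Fixpoint unpair (p : nat) : nat * nat :=
  match p with
  | 0 => (0, 0)
  | S p' => let (a, b) := unpair p' in
            match a with 0 => (S b, 0) | S a' => (a', S b) end
  end.

Lemma unpair_tri s b : b <= s -> unpair (tri s + b) = (s - b, b).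
Proof.
  revert b; induction s as [|s IHs]; intros b Hb.
  - replace b with 0 by lia. reflexivity.
  - induction b as [|b IHb].
    + replace (tri (S s) + 0) with (S (tri s + s)) by (simpl; lia).
      cbn [unpair]. rewrite IHs by lia. replace (s - s) with 0 by lia. reflexivity.
    + replace (tri (S s) + S b) with (S (tri (S s) + b)) by lia.
      cbn [unpair]. rewrite IHb by lia.
      replace (S s - b) with (S (S s - S b)) by lia. reflexivity.
Qed.

Lemma unpair_npair a b : unpair (npair a b) = (a, b).
Proof. rewrite npair_tri, unpair_tri by lia. f_equal; lia. Qed.

Lemma npair_inj a b c d : npair a b = npair c d -> a = c /\ b = d.
Proof.
  intro E. assert (U := unpair_npair a b). rewrite E, unpair_npair in U.
  injection U as -> ->. auto.
Qed.

Lemma npair_unpair p : npair (fst (unpair p)) (snd (unpair p)) = p.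
Proof.
  induction p as [|p IHp]; [reflexivity|].
  cbn [unpair]. destruct (unpair p) as [[|a] b]; simpl in *; rewrite !npair_tri in *.
  - simpl in *. rewrite !Nat.add_0_r. lia.
  - replace (a + S b) with (S a + b) by lia. lia.
Qed.

Lemma npair_surj p : exists a b, p = npair a b.
Proof. exists (fst (unpair p)), (snd (unpair p)). symmetry. apply npair_unpair. Qed.

(** * Primitive recursive programs *)

Definition one_prog : prf := PComp PSucc [PZero].
Definition add_prog : prf := PPrec (PProj 0) (PComp PSucc [PProj 1]).
Definition mul_prog : prf := PPrec PZero (PComp add_prog [PProj 1; PProj 2]).
Definition pred_prog : prf := PPrec PZero (PProj 0).
Definition sub_prog : prf := PPrec (PProj 0) (PComp pred_prog [PProj 1]).
Definition tri_prog : prf := PPrec PZero (PComp add_prog [PProj 1; PComp PSucc [PProj 0]]).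
Definition npair_prog : prf :=
  PComp add_prog [PComp tri_prog [PComp add_prog [PProj 0; PProj 1]]; PProj 1].

Ltac evals_cons := repeat (apply evs_cons || apply evs_nil).

Lemma eval_one_prog v : eval one_prog v 1.
Proof. eapply ev_comp; evals_cons; [apply ev_zero | apply (ev_succ [0])]. Qed.

Lemma eval_add_prog a b : eval add_prog [a; b] (a + b).
Proof.
  induction a as [|a IHa].
  - apply ev_prec0, (ev_proj 0 [b]).
  - eapply ev_precS; [exact IHa|].
    eapply ev_comp; evals_cons; [apply (ev_proj 1) | apply (ev_succ [a + b])].
Qed.

Lemma eval_mul_prog a b : eval mul_prog [a; b] (a * b).
Proof.
  induction a as [|a IHa].
  - apply ev_prec0, ev_zero.
  - eapply ev_precS; [exact IHa|].
    eapply ev_comp; evals_cons; [apply (ev_proj 1) | apply (ev_proj 2) |].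
    replace (S a * b) with (a * b + b) by lia. apply eval_add_prog.
Qed.

Lemma eval_pred_prog a : eval pred_prog [a] (pred a).
Proof.
  induction a as [|a IHa].
  - apply ev_prec0, ev_zero.
  - eapply ev_precS; [exact IHa | apply (ev_proj 0)].
Qed.

Lemma eval_sub_prog b a : eval sub_prog [b; a] (a - b).
Proof.
  induction b as [|b IHb].
  - apply ev_prec0. rewrite Nat.sub_0_r. apply (ev_proj 0 [a]).
  - eapply ev_precS; [exact IHb|].
    eapply ev_comp; evals_cons; [apply (ev_proj 1) |].
    replace (a - S b) with (pred (a - b)) by lia. apply eval_pred_prog.
Qed.

Lemma eval_tri_prog k : eval tri_prog [k] (tri k).
Proof.
  induction k as [|k IHk].
  - apply ev_prec0, ev_zero.
  - eapply ev_precS; [exact IHk|].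
    eapply ev_comp; evals_cons; [apply (ev_proj 1) | | apply eval_add_prog].
    eapply ev_comp; evals_cons; [apply (ev_proj 0) | apply (ev_succ [k])].
Qed.

Lemma eval_npair_prog a b : eval npair_prog [a; b] (npair a b).
Proof.
  rewrite npair_tri. eapply ev_comp; evals_cons; [| apply (ev_proj 1) | apply eval_add_prog].
  eapply ev_comp; evals_cons; [| apply eval_tri_prog].
  eapply ev_comp; evals_cons; [apply (ev_proj 0) | apply (ev_proj 1) | apply eval_add_prog].
Qed.

(** * Arithmetic expressions and their compilation *)

Inductive expr : Type :=
| EVar (i : nat)
| EZero
| ESucc (e : expr)
| EAdd (e1 e2 : expr)
| EMul (e1 e2 : expr)
| ESub (e1 e2 : expr)
| EPair (e1 e2 : expr)
| EProdBelow (k : nat) (bound body : expr).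

Fixpoint bprod (F : nat -> nat) (n : nat) : nat :=
  match n with 0 => 1 | S n' => bprod F n' * F n' end.

Definition firstvars (k : nat) (v : list nat) : list nat :=
  map (fun j => nth j v 0) (seq 0 k).

(* In [EProdBelow k bound body] the body only sees the bound index followed by
   the first [k] variables: a program cannot copy an environment of unknown length. *)
Fixpoint den (e : expr) (v : list nat) : nat :=
  match e with
  | EVar i => nth i v 0
  | EZero => 0
  | ESucc e => S (den e v)
  | EAdd e1 e2 => den e1 v + den e2 v
  | EMul e1 e2 => den e1 v * den e2 v
  | ESub e1 e2 => den e1 v - den e2 v
  | EPair e1 e2 => npair (den e1 v) (den e2 v)
  | EProdBelow k b body => bprod (fun i => den body (i :: firstvars k v)) (den b v)
  end.

Definition bprod_prog (k : nat) (body : prf) : prf :=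
  PPrec one_prog (PComp mul_prog [PProj 1; PComp body (PProj 0 :: map PProj (seq 2 k))]).

Fixpoint compile (e : expr) : prf :=
  match e with
  | EVar i => PProj i
  | EZero => PZero
  | ESucc e => PComp PSucc [compile e]
  | EAdd e1 e2 => PComp add_prog [compile e1; compile e2]
  | EMul e1 e2 => PComp mul_prog [compile e1; compile e2]
  | ESub e1 e2 => PComp sub_prog [compile e2; compile e1]
  | EPair e1 e2 => PComp npair_prog [compile e1; compile e2]
  | EProdBelow k b body => PComp (bprod_prog k (compile body)) (compile b :: map PProj (seq 0 k))
  end.

Lemma bprod_eq0 F n : bprod F n = 0 <-> exists i, i < n /\ F i = 0.
Proof.
  induction n as [|n IHn]; simpl.
  - split; [discriminate | intros [i [Hi _]]; lia].
  - rewrite Nat.eq_mul_0, IHn. split.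
    + intros [[i [Hi E]] | E]; [exists i | exists n]; split; auto; lia.
    + intros [i [Hi E]]. destruct (Nat.eq_dec i n) as [->|Hne]; auto.
      left; exists i; split; auto; lia.
Qed.

Lemma firstvars_idem k v : firstvars k (firstvars k v) = firstvars k v.
Proof.
  unfold firstvars at 1. apply map_ext_in. intros j Hj. apply in_seq in Hj.
  unfold firstvars. set (f := fun j => nth j v 0).
  rewrite nth_indep with (d' := f 0) by (rewrite length_map, length_seq; lia).
  rewrite map_nth, seq_nth by lia. reflexivity.
Qed.

Lemma evals_proj s v : evals (map PProj s) v (map (fun j => nth j v 0) s).
Proof. induction s; simpl; constructor; auto. apply ev_proj. Qed.

Lemma evals_proj_skip2 k n z w :
  evals (PProj 0 :: map PProj (seq 2 k)) (n :: z :: w) (n :: firstvars k w).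
Proof.
  constructor; [apply (ev_proj 0) |].
  rewrite <- !seq_shift, !map_map.
  assert (H := evals_proj (map S (map S (seq 0 k))) (n :: z :: w)).
  rewrite !map_map in H. exact H.
Qed.

Lemma eval_bprod_prog k body F :
  (forall w, eval body w (F w)) ->
  forall n w, eval (bprod_prog k body) (n :: w) (bprod (fun i => F (i :: firstvars k w)) n).
Proof.
  intros Hbody n w. induction n as [|n IHn].
  - apply ev_prec0, eval_one_prog.
  - eapply ev_precS; [exact IHn |].
    eapply ev_comp; evals_cons; [apply (ev_proj 1) | | apply eval_mul_prog].
    eapply ev_comp; [apply evals_proj_skip2 | apply Hbody].
Qed.

Lemma compile_correct e v : eval (compile e) v (den e v).
Proof.
  revert v; induction e as [i| |e IH|e1 IH1 e2 IH2|e1 IH1 e2 IH2|e1 IH1 e2 IH2|e1 IH1 e2 IH2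
                           |k b IHb body IHbody]; intro v; simpl.
  - apply ev_proj.
  - apply ev_zero.
  - eapply ev_comp; evals_cons; [apply IH | apply (ev_succ [den e v])].
  - eapply ev_comp; evals_cons; auto. apply eval_add_prog.
  - eapply ev_comp; evals_cons; auto. apply eval_mul_prog.
  - eapply ev_comp; evals_cons; auto. apply eval_sub_prog.
  - eapply ev_comp; evals_cons; auto. apply eval_npair_prog.
  - eapply ev_comp; [apply evs_cons; [apply IHb | apply evals_proj] |].
    assert (H := eval_bprod_prog k _ _ IHbody (den b v) (firstvars k v)).
    rewrite firstvars_idem in H. exact H.
Qed.

Inductive mu_free : prf -> Prop :=
| mf_zero : mu_free PZero
| mf_succ : mu_free PSucc
| mf_proj i : mu_free (PProj i)
| mf_comp f gs : mu_free f -> Forall mu_free gs -> mu_free (PComp f gs)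
| mf_prec f g : mu_free f -> mu_free g -> mu_free (PPrec f g).

Scheme eval_mind := Induction for eval Sort Prop
  with evals_mind := Induction for evals Sort Prop.

Lemma eval_mu_free_functional P v y :
  eval P v y -> mu_free P -> forall y', eval P v y' -> y = y'.
Proof.
  intro H; revert P v y H.
  apply (eval_mind (fun P v y _ => mu_free P -> forall y', eval P v y' -> y = y')
                   (fun gs v ws _ => Forall mu_free gs -> forall ws', evals gs v ws' -> ws = ws')).
  - intros v _ y' Hy'. inversion Hy'; auto.
  - intros v _ y' Hy'. inversion Hy'; auto.
  - intros i v _ y' Hy'. inversion Hy'; auto.
  - intros f gs v ws y _ IHgs _ IHf Hm y' Hy'. inversion Hm; subst. inversion Hy'; subst.
    assert (ws = ws0) as <- by auto. auto.
  - intros f g v y _ IHf Hm y' Hy'. inversion Hm; subst. inversion Hy'; subst. auto.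
  - intros f g n v z y _ IHr _ IHg Hm y' Hy'. inversion Hm; subst. inversion Hy'; subst.
    assert (z = z0) as <- by auto. auto.
  - intros f v n _ _ _ Hm. inversion Hm.
  - intros v _ ws' Hws'. inversion Hws'; auto.
  - intros g gs v w ws _ IHg _ IHgs Hm ws' Hws'. inversion Hm; subst. inversion Hws'; subst.
    f_equal; auto.
Qed.

Lemma compile_mu_free e : mu_free (compile e).
Proof.
  assert (Hadd : mu_free add_prog) by repeat constructor.
  assert (Hmul : mu_free mul_prog) by (repeat constructor; auto).
  assert (Hsub : mu_free sub_prog) by repeat constructor.
  assert (Hnpair : mu_free npair_prog) by (repeat constructor; auto).
  assert (Hproj : forall s, Forall mu_free (map PProj s))
    by (induction s; constructor; auto; constructor).
  induction e; simpl; repeat constructor; auto.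
Qed.

Lemma compile_functional e v y : eval (compile e) v y -> y = den e v.
Proof.
  intro H. symmetry.
  exact (eval_mu_free_functional _ _ _ (compile_correct e v) (compile_mu_free e) y H).
Qed.

Lemma halts_mu_compile f x : halts (PMu (compile f)) x <-> exists m, den f [m; x] = 0.
Proof.
  split.
  - intros [m Hm]. exists m. symmetry. apply compile_functional. inversion Hm. assumption.
  - intro Hex.
    destruct (dec_inh_nat_subset_has_unique_least_element (fun m => den f [m; x] = 0))
      as [m [[Hm Hleast] _]]; [intro m; destruct (Nat.eq_dec (den f [m; x]) 0); auto | exact Hex |].
    exists m. apply ev_mu; [rewrite <- Hm; apply compile_correct |].
    intros m' Hm'. destruct (den f [m'; x]) as [|k] eqn:E.
    + apply Hleast in E. lia.
    + exists k. rewrite <- E. apply compile_correct.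
Qed.

(** * Coding rule schemes *)

Lemma code_atom_inj a1 a2 : code_atom a1 = code_atom a2 -> a1 = a2.
Proof.
  destruct a1, a2; simpl; intros [E1 E2]%npair_inj; try discriminate;
    apply npair_inj in E2 as [-> ->]; reflexivity.
Qed.

Lemma code_basic_inj b1 b2 : code_basic b1 = code_basic b2 -> b1 = b2.
Proof.
  destruct b1, b2; simpl; intros [E1 E2]%npair_inj; try discriminate;
    apply code_atom_inj in E2 as ->; reflexivity.
Qed.

Lemma code_list_inj l1 l2 : code_list l1 = code_list l2 -> l1 = l2.
Proof.
  revert l2; induction l1 as [|b1 l1 IH]; intros [|b2 l2]; simpl; try discriminate; auto.
  intros [E1 E2]%eq_add_S%npair_inj. f_equal; auto using code_basic_inj.
Qed.

Definition code_rule (r : list basic * basic) : nat :=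
  npair (code_list (fst r)) (code_basic (snd r)).

Lemma code_rule_inj r1 r2 : code_rule r1 = code_rule r2 -> r1 = r2.
Proof.
  destruct r1, r2; unfold code_rule; simpl. intros [E1 E2]%npair_inj.
  f_equal; auto using code_list_inj, code_basic_inj.
Qed.

Definition subst_atom (s : nat -> nat) (a : atom) : atom :=
  match a with ALt x y => ALt (s x) (s y) | AEq x y => AEq (s x) (s y) end.

Definition subst_basic (s : nat -> nat) (b : basic) : basic :=
  match b with Pos a => Pos (subst_atom s a) | Neg a => Neg (subst_atom s a) end.

Definition subst_rule (s : nat -> nat) (r : list basic * basic) : list basic * basic :=
  (map (subst_basic s) (fst r), subst_basic s (snd r)).

Lemma subst_rule_ext s s' r : (forall i, s i = s' i) -> subst_rule s r = subst_rule s' r.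
Proof.
  intro E. assert (Eb : forall b, subst_basic s b = subst_basic s' b)
    by (intros [[]|[]]; simpl; rewrite !E; reflexivity).
  unfold subst_rule. rewrite Eb. f_equal. apply map_ext, Eb.
Qed.

Definition Ecode_atom (s : nat -> expr) (a : atom) : expr :=
  match a with
  | ALt x y => EPair EZero (EPair (s x) (s y))
  | AEq x y => EPair (ESucc EZero) (EPair (s x) (s y))
  end.

Definition Ecode_basic (s : nat -> expr) (b : basic) : expr :=
  match b with
  | Pos a => EPair EZero (Ecode_atom s a)
  | Neg a => EPair (ESucc EZero) (Ecode_atom s a)
  end.

Fixpoint Ecode_list (s : nat -> expr) (l : list basic) : expr :=
  match l with [] => EZero | b :: l' => ESucc (EPair (Ecode_basic s b) (Ecode_list s l')) end.

Definition Ecode_rule (s : nat -> expr) (r : list basic * basic) : expr :=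
  EPair (Ecode_list s (fst r)) (Ecode_basic s (snd r)).

Lemma den_Ecode_rule s r v :
  den (Ecode_rule s r) v = code_rule (subst_rule (fun i => den (s i) v) r).
Proof.
  assert (Eb : forall b,
             den (Ecode_basic s b) v = code_basic (subst_basic (fun i => den (s i) v) b))
    by (intros [[]|[]]; reflexivity).
  destruct r as [l phi]. unfold code_rule, subst_rule; simpl. rewrite Eb. f_equal.
  induction l as [|b l IH]; simpl; [reflexivity|]. rewrite Eb, IH. reflexivity.
Qed.

Definition Eeqdist (u w : expr) : expr := EAdd (ESub u w) (ESub w u).

Definition Emember (x : expr) (cs : list expr) : expr :=
  fold_right (fun c acc => EMul (Eeqdist x c) acc) (ESucc EZero) cs.

Lemma den_Emember_eq0 x cs v :
  den (Emember x cs) v = 0 <-> exists c, In c cs /\ den x v = den c v.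
Proof.
  induction cs as [|c cs IH]; simpl.
  - split; [discriminate | intros [? [[] _]]].
  - rewrite Nat.eq_mul_0, IH. split.
    + intros [E | [c' [Hc' E]]]; [exists c | exists c']; split; auto; lia.
    + intros [c' [[<- | Hc'] E]]; [left | right; exists c']; auto; lia.
Qed.

Lemma den_EProdBelow_eq0 k b body v :
  den (EProdBelow k b body) v = 0 <->
  exists i, i < den b v /\ den body (i :: firstvars k v) = 0.
Proof. apply bprod_eq0. Qed.

(** * The lexicographic square *)

Definition lex_square (A : structure) : structure :=
  Struct (fun p => dom A (fst (unpair p)) /\ dom A (snd (unpair p)))
         (fun p q => rel A (fst (unpair p)) (fst (unpair q)) \/
                     (fst (unpair p) = fst (unpair q) /\
                      rel A (snd (unpair p)) (snd (unpair q)))).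

Lemma lex_square_dom A a b : dom (lex_square A) (npair a b) <-> dom A a /\ dom A b.
Proof. simpl. rewrite unpair_npair. reflexivity. Qed.

Lemma lex_square_rel A a b c d :
  rel (lex_square A) (npair a b) (npair c d) <-> rel A a c \/ (a = c /\ rel A b d).
Proof. simpl. rewrite !unpair_npair. reflexivity. Qed.

(* Pattern variables 0, 1, 2, 3 stand for a, b, c, d and 4, 5, 6 for the
   pairs <a,b>, <c,d>, <a,d>. *)
Definition lex_env (a b c d : nat) (i : nat) : nat :=
  nth i [a; b; c; d; npair a b; npair c d; npair a d] 0.

Definition rule_dom : list basic * basic :=
  ([Pos (AEq 0 0); Pos (AEq 1 1)], Pos (AEq 4 4)).
Definition rule_neq_fst : list basic * basic :=
  ([Neg (AEq 0 2); Pos (AEq 1 1); Pos (AEq 3 3)], Neg (AEq 4 5)).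
Definition rule_neq_snd : list basic * basic :=
  ([Pos (AEq 0 0); Neg (AEq 1 3)], Neg (AEq 4 6)).
Definition rule_lt_fst : list basic * basic :=
  ([Pos (ALt 0 2); Pos (AEq 1 1); Pos (AEq 3 3)], Pos (ALt 4 5)).
Definition rule_lt_snd : list basic * basic :=
  ([Pos (AEq 0 0); Pos (ALt 1 3)], Pos (ALt 4 6)).
Definition rule_nlt_fst : list basic * basic :=
  ([Neg (ALt 0 2); Neg (AEq 0 2); Pos (AEq 1 1); Pos (AEq 3 3)], Neg (ALt 4 5)).
Definition rule_nlt_snd : list basic * basic :=
  ([Neg (ALt 0 2); Neg (ALt 1 3)], Neg (ALt 4 5)).

Definition lex_square_rules : list (list basic * basic) :=
  [rule_dom; rule_neq_fst; rule_neq_snd; rule_lt_fst; rule_lt_snd; rule_nlt_fst; rule_nlt_snd].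

Definition lex_square_axiom (alpha : list basic) (phi : basic) : Prop :=
  exists a b c d r, In r lex_square_rules /\ (alpha, phi) = subst_rule (lex_env a b c d) r.

Lemma forall_in_pair (P : nat -> Prop) x y : (forall c, In c [x; y] -> P c) <-> P x /\ P y.
Proof. simpl. split; [auto | intros [Hx Hy] c [<- | [<- | []]]; auto]. Qed.

Lemma diagram_eq X x y : diagram X (Pos (AEq x y)) <-> dom X x /\ x = y.
Proof. cbn [diagram atom_consts atom_holds]. rewrite forall_in_pair. intuition congruence. Qed.

Lemma diagram_neq X x y : diagram X (Neg (AEq x y)) <-> dom X x /\ dom X y /\ x <> y.
Proof. cbn [diagram atom_consts atom_holds]. rewrite forall_in_pair. tauto. Qed.

Lemma diagram_lt X x y : diagram X (Pos (ALt x y)) <-> dom X x /\ dom X y /\ rel X x y.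
Proof. cbn [diagram atom_consts atom_holds]. rewrite forall_in_pair. tauto. Qed.

Lemma diagram_nlt X x y : diagram X (Neg (ALt x y)) <-> dom X x /\ dom X y /\ ~ rel X x y.
Proof. cbn [diagram atom_consts atom_holds]. rewrite forall_in_pair. tauto. Qed.

Lemma lex_square_axiom_sound A alpha phi :
  lex_square_axiom alpha phi -> (forall psi, In psi alpha -> diagram A psi) ->
  diagram (lex_square A) phi.
Proof.
  intros [a [b [c [d [r [Hr E]]]]]] Halpha. rewrite <- Forall_forall in Halpha.
  simpl in Hr; repeat destruct Hr as [<- | Hr]; try contradiction;
    unfold subst_rule, lex_env in E; simpl in E;
    injection E as -> ->; rewrite !Forall_cons_iff in Halpha; decompose [and] Halpha;
    rewrite ?diagram_eq, ?diagram_neq, ?diagram_lt, ?diagram_nlt in *;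
    rewrite ?lex_square_dom, ?lex_square_rel; intuition; subst;
    match goal with H : npair _ _ = npair _ _ |- _ => apply npair_inj in H; intuition end.
Qed.

Ltac by_rule r a b c d :=
  exists (fst (subst_rule (lex_env a b c d) r)); split;
  [ exists a, b, c, d, r; split; [simpl; tauto | reflexivity]
  | apply Forall_forall; unfold subst_rule, lex_env; simpl;
    repeat (apply Forall_cons;
            [rewrite ?diagram_eq, ?diagram_neq, ?diagram_lt, ?diagram_nlt; tauto |]);
    apply Forall_nil ].

Lemma lex_square_axiom_complete A phi :
  diagram (lex_square A) phi ->
  exists alpha, lex_square_axiom alpha phi /\ forall psi, In psi alpha -> diagram A psi.
Proof.
  destruct phi as [[p q | p q] | [p q | p q]];
    rewrite ?diagram_eq, ?diagram_neq, ?diagram_lt, ?diagram_nlt;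
    destruct (npair_surj p) as (a & b & ->), (npair_surj q) as (c & d & ->);
    rewrite !lex_square_dom, ?lex_square_rel.
  - intros [[Ha Hb] [[Hc Hd] [Hac | [<- Hbd]]]].
    + by_rule rule_lt_fst a b c d.
    + by_rule rule_lt_snd a b a d.
  - intros [[Ha Hb] [<- <-]%npair_inj]. by_rule rule_dom a b a b.
  - intros [[Ha Hb] [[Hc Hd] Hnlt]]. destruct (Nat.eq_dec a c) as [<- | Hac].
    + by_rule rule_nlt_snd a b a d.
    + by_rule rule_nlt_fst a b c d.
  - intros [[Ha Hb] [[Hc Hd] Hneq]]. destruct (Nat.eq_dec a c) as [<- | Hac].
    + assert (b <> d) by congruence. by_rule rule_neq_snd a b a d.
    + by_rule rule_neq_fst a b c d.
Qed.

Definition Elex_env (i : nat) : expr :=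
  nth i [EVar 3; EVar 2; EVar 1; EVar 0;
         EPair (EVar 3) (EVar 2); EPair (EVar 1) (EVar 0); EPair (EVar 3) (EVar 0)] EZero.

Lemma den_Ecode_rule_lex_env a b c d w r :
  den (Ecode_rule Elex_env r) (d :: c :: b :: a :: w) = code_rule (subst_rule (lex_env a b c d) r).
Proof.
  rewrite den_Ecode_rule. f_equal. apply subst_rule_ext. intro i.
  do 7 (destruct i as [|i]; [reflexivity |]). destruct i; reflexivity.
Qed.

(* On [m; x], the innermost environment is [d; c; b; a; m; x] with a, b, c, d < m. *)
Definition lex_square_search : expr :=
  EProdBelow 2 (EVar 0) (EProdBelow 3 (EVar 1) (EProdBelow 4 (EVar 2) (EProdBelow 5 (EVar 3)
    (Emember (EVar 5) (map (Ecode_rule Elex_env) lex_square_rules))))).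

Lemma den_lex_square_search_eq0 m x :
  den lex_square_search [m; x] = 0 <->
  exists a b c d r, a < m /\ b < m /\ c < m /\ d < m /\ In r lex_square_rules /\
                    x = code_rule (subst_rule (lex_env a b c d) r).
Proof.
  unfold lex_square_search. repeat setoid_rewrite den_EProdBelow_eq0.
  setoid_rewrite den_Emember_eq0. setoid_rewrite in_map_iff. cbn [firstvars seq map nth den].
  split.
  - intros (a & Ha & b & Hb & c & Hc & d & Hd & e & (r & <- & Hr) & Ex).
    rewrite den_Ecode_rule_lex_env in Ex. exists a, b, c, d, r. tauto.
  - intros (a & b & c & d & r & Ha & Hb & Hc & Hd & Hr & Ex).
    exists a; split; [exact Ha |]. exists b; split; [exact Hb |].
    exists c; split; [exact Hc |]. exists d; split; [exact Hd |].
    exists (Ecode_rule Elex_env r). split; [eauto |].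
    rewrite den_Ecode_rule_lex_env. exact Ex.
Qed.

Definition lex_square_prog : prf := PMu (compile lex_square_search).

Lemma halts_lex_square_prog x :
  halts lex_square_prog x <->
  exists a b c d r, In r lex_square_rules /\ x = code_rule (subst_rule (lex_env a b c d) r).
Proof.
  unfold lex_square_prog. rewrite halts_mu_compile. split.
  - intros [m (a & b & c & d & r & _ & _ & _ & _ & H)%den_lex_square_search_eq0].
    exists a, b, c, d, r. exact H.
  - intros (a & b & c & d & r & Hr & Ex). exists (S (a + b + c + d)).
    apply den_lex_square_search_eq0. exists a, b, c, d, r. repeat split; auto; lia.
Qed.

Lemma enum_apply_lex_square_prog X phi :
  enum_apply lex_square_prog X phi <->
  exists alpha, lex_square_axiom alpha phi /\ forall psi, In psi alpha -> X psi.
Proof.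
  unfold enum_apply. setoid_rewrite halts_lex_square_prog. split.
  - intros (alpha & (a & b & c & d & r & Hr & E) & HX). exists alpha. split; [| exact HX].
    change (code_rule (alpha, phi) = code_rule (subst_rule (lex_env a b c d) r)) in E.
    apply code_rule_inj in E. exists a, b, c, d, r. auto.
  - intros (alpha & (a & b & c & d & r & Hr & E) & HX). exists alpha. split; [| exact HX].
    exists a, b, c, d, r. split; [exact Hr |]. rewrite <- E. reflexivity.
Qed.

Lemma enum_apply_lex_square_prog_diagram A phi :
  enum_apply lex_square_prog (diagram A) phi <-> diagram (lex_square A) phi.
Proof.
  rewrite enum_apply_lex_square_prog. split.
  - intros (alpha & Hax & HA). exact (lex_square_axiom_sound A alpha phi Hax HA).
  - apply lex_square_axiom_complete.
Qed.

(** * Powers of omega and isomorphism types *)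

Lemma omega_pow_eq n (x y : omega_pow n) : proj1_sig x = proj1_sig y -> x = y.
Proof.
  destruct x as [l Hl], y as [l' Hl']; simpl; intros <-.
  f_equal. apply UIP_dec, Nat.eq_dec.
Qed.

Lemma app_inj_length {T : Type} (l1 l2 l3 l4 : list T) :
  length l1 = length l3 -> l1 ++ l2 = l3 ++ l4 -> l1 = l3 /\ l2 = l4.
Proof.
  revert l3; induction l1 as [|x l1 IH]; intros [|y l3]; simpl; try discriminate; auto.
  intros [=Hlen] [= -> E]. destruct (IH l3 Hlen E) as [-> ->]. auto.
Qed.

Lemma lexlt_app (l1 l2 l3 l4 : list nat) :
  length l1 = length l3 ->
  (lexlt (l1 ++ l2) (l3 ++ l4) <-> lexlt l1 l3 \/ (l1 = l3 /\ lexlt l2 l4)).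
Proof.
  revert l3; induction l1 as [|x l1 IH]; intros [|y l3]; simpl; try discriminate.
  - intuition.
  - intros [=Hlen]. rewrite (IH l3 Hlen). intuition congruence.
Qed.

Definition omega_pow_app n (x y : omega_pow n) : omega_pow (2 * n).
Proof.
  exists (proj1_sig x ++ proj1_sig y).
  rewrite length_app, (proj2_sig x), (proj2_sig y). lia.
Defined.

Lemma lex_square_iso_to n A (R : omega_pow n -> omega_pow n -> Prop)
  (R2 : omega_pow (2 * n) -> omega_pow (2 * n) -> Prop) :
  (forall a b c d, R2 (omega_pow_app n a b) (omega_pow_app n c d) <-> R a c \/ (a = c /\ R b d)) ->
  iso_to A (omega_pow n) R -> iso_to (lex_square A) (omega_pow (2 * n)) R2.
Proof.
  intros HR [f [Hinj [Hsurj Hrel]]].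
  exists (fun p => omega_pow_app n (f (fst (unpair p))) (f (snd (unpair p)))).
  split; [| split].
  - intros p q [Hp1 Hp2] [Hq1 Hq2] E.
    apply (f_equal (@proj1_sig _ _)), app_inj_length in E as [E1 E2];
      [| simpl; rewrite !(proj2_sig (f _)); reflexivity].
    apply omega_pow_eq, Hinj in E1, E2; auto.
    rewrite <- (npair_unpair p), <- (npair_unpair q). congruence.
  - intros [l Hl].
    assert (L1 : length (firstn n l) = n) by (rewrite length_firstn; lia).
    assert (L2 : length (skipn n l) = n) by (rewrite length_skipn; lia).
    destruct (Hsurj (exist _ _ L1)) as [a [Ha Ea]], (Hsurj (exist _ _ L2)) as [b [Hb Eb]].
    exists (npair a b). rewrite lex_square_dom, unpair_npair. split; [auto |].
    apply omega_pow_eq. simpl. rewrite Ea, Eb. apply firstn_skipn.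
  - intros p q [Hp1 Hp2] [Hq1 Hq2]. simpl. rewrite HR, !Hrel by auto.
    split; intros [H | [E H]]; auto; right; split; auto.
Qed.

Lemma omega_pow_app_lt n a b c d :
  omega_pow_lt (2 * n) (omega_pow_app n a b) (omega_pow_app n c d) <->
  omega_pow_lt n a c \/ (a = c /\ omega_pow_lt n b d).
Proof.
  unfold omega_pow_lt. simpl. rewrite lexlt_app by (rewrite (proj2_sig a), (proj2_sig c); auto).
  split; intros [H | [E H]]; auto; right; split; auto; [apply omega_pow_eq | subst]; auto.
Qed.

Lemma class_lex_square n A : class_omega_pow n A -> class_omega_pow (2 * n) (lex_square A).
Proof.
  intros [H | H]; [left | right]; eapply lex_square_iso_to; try exact H; intros a b c d.
  - apply omega_pow_app_lt.
  - unfold omega_pow_rev_lt. rewrite omega_pow_app_lt.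
    split; intros [H' | [<- H']]; auto.
Qed.

Lemma iso_to_struct_iso X Y T R : iso_to X T R -> iso_to Y T R -> struct_iso X Y.
Proof.
  intros [f [Hfinj [Hfsurj Hfrel]]] [g [Hginj [Hgsurj Hgrel]]].
  destruct (functional_choice _ Hgsurj) as [ginv Hginv].
  exists (fun x => ginv (f x)). split; [| split; [| split]].
  - intros x _. apply Hginv.
  - intros x x' Hx Hx' E. apply Hfinj; auto.
    rewrite <- (proj2 (Hginv (f x))), <- (proj2 (Hginv (f x'))), E. reflexivity.
  - intros y Hy. destruct (Hfsurj (g y)) as [x [Hx Ex]]. exists x. split; [exact Hx |].
    rewrite Ex. apply Hginj; [apply Hginv | exact Hy | apply Hginv].
  - intros x x' Hx Hx'. rewrite Hfrel, Hgrel by (auto; apply Hginv).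
    rewrite !(proj2 (Hginv _)). reflexivity.
Qed.

Lemma struct_iso_trans X Y Z : struct_iso X Y -> struct_iso Y Z -> struct_iso X Z.
Proof.
  intros [f [Hfdom [Hfinj [Hfsurj Hfrel]]]] [g [Hgdom [Hginj [Hgsurj Hgrel]]]].
  exists (fun x => g (f x)). split; [| split; [| split]].
  - auto.
  - intros x x' Hx Hx' E. auto.
  - intros z Hz. destruct (Hgsurj z Hz) as [y [Hy <-]]. destruct (Hfsurj y Hy) as [x [Hx <-]].
    eauto.
  - intros x x' Hx Hx'. rewrite Hfrel, Hgrel by auto. reflexivity.
Qed.

Lemma same_diagram_struct_iso X Y :
  (forall phi, diagram X phi <-> diagram Y phi) -> struct_iso X Y.
Proof.
  intro H.
  assert (Hdom : forall c, dom X c <-> dom Y c).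
  { intro c. specialize (H (Pos (AEq c c))). rewrite !diagram_eq in H. tauto. }
  exists (fun x => x). split; [| split; [| split]].
  - apply Hdom.
  - auto.
  - intros z Hz. exists z. split; [apply Hdom |]; auto.
  - intros x y Hx Hy. specialize (H (Pos (ALt x y))). rewrite !diagram_lt, <- !Hdom in H. tauto.
Qed.

Lemma struct_iso_same_diagram X X' Y Y' :
  (forall phi, diagram X phi <-> diagram X' phi) ->
  (forall phi, diagram Y phi <-> diagram Y' phi) ->
  struct_iso X Y <-> struct_iso X' Y'.
Proof.
  intros HX HY.
  assert (HX' : forall phi, diagram X' phi <-> diagram X phi) by firstorder.
  assert (HY' : forall phi, diagram Y' phi <-> diagram Y phi) by firstorder.
  split; intro I.
  - apply (struct_iso_trans _ X); [apply same_diagram_struct_iso, HX' |].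
    apply (struct_iso_trans _ Y); [exact I | apply same_diagram_struct_iso, HY].
  - apply (struct_iso_trans _ X'); [apply same_diagram_struct_iso, HX |].
    apply (struct_iso_trans _ Y'); [exact I | apply same_diagram_struct_iso, HY'].
Qed.

Definition has_least (X : structure) : Prop :=
  exists x0, dom X x0 /\ forall x, dom X x -> x <> x0 -> rel X x0 x.

Lemma struct_iso_has_least X Y : struct_iso X Y -> has_least X <-> has_least Y.
Proof.
  intros [h [Hdom [Hinj [Hsurj Hrel]]]]. split.
  - intros [x0 [Hx0 Hleast]]. exists (h x0). split; [auto |].
    intros y Hy Hne. destruct (Hsurj y Hy) as [x [Hx <-]].
    apply Hrel, Hleast; auto.
  - intros [y0 [Hy0 Hleast]]. destruct (Hsurj y0 Hy0) as [x0 [Hx0 <-]].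
    exists x0. split; [exact Hx0 |]. intros x Hx Hne.
    apply Hrel, Hleast; auto.
Qed.

Lemma lexlt_repeat0 k l : length l = k -> l <> repeat 0 k -> lexlt (repeat 0 k) l.
Proof.
  intros <-. induction l as [|[|x] l IH]; simpl; intro H.
  - contradiction.
  - right. split; [reflexivity |]. apply IH. congruence.
  - left. lia.
Qed.

Lemma omega_pow_has_least k X : iso_to X (omega_pow k) (omega_pow_lt k) -> has_least X.
Proof.
  intros [f [Hinj [Hsurj Hrel]]].
  destruct (Hsurj (exist _ (repeat 0 k) (repeat_length 0 k))) as [x0 [Hx0 E0]].
  exists x0. split; [exact Hx0 |]. intros x Hx Hne. apply Hrel; auto.
  unfold omega_pow_lt. rewrite E0. apply lexlt_repeat0; [apply proj2_sig |]. intro E.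
  apply Hne, Hinj; auto. rewrite E0. apply omega_pow_eq. exact E.
Qed.

Lemma omega_pow_rev_not_has_least k X :
  1 <= k -> iso_to X (omega_pow k) (omega_pow_rev_lt k) -> ~ has_least X.
Proof.
  intros Hk [f [Hinj [Hsurj Hrel]]] [x0 [Hx0 Hleast]].
  destruct (f x0) as [[|h l] Hl] eqn:E0; [simpl in Hl; lia |].
  assert (Hl' : length (S h :: l) = k) by exact Hl.
  destruct (Hsurj (exist _ _ Hl')) as [x [Hx Ex]].
  assert (Hne : x <> x0) by (intros ->; rewrite E0 in Ex; injection Ex; lia).
  apply (Hrel x0 x Hx0 Hx) in Hleast; auto.
  unfold omega_pow_rev_lt, omega_pow_lt in Hleast. rewrite E0, Ex in Hleast. simpl in Hleast. lia.
Qed.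

Lemma class_omega_pow_struct_iso k A B :
  1 <= k -> class_omega_pow k A -> class_omega_pow k B ->
  struct_iso A B <-> (has_least A <-> has_least B).
Proof.
  intros Hk [HA | HA] [HB | HB].
  - split; [intros _ | intros _; exact (iso_to_struct_iso _ _ _ _ HA HB)].
    split; intros _; eapply omega_pow_has_least; eauto.
  - pose proof (omega_pow_has_least _ _ HA). pose proof (omega_pow_rev_not_has_least _ _ Hk HB).
    split; [intros I; apply struct_iso_has_least in I |]; tauto.
  - pose proof (omega_pow_rev_not_has_least _ _ Hk HA). pose proof (omega_pow_has_least _ _ HB).
    split; [intros I; apply struct_iso_has_least in I |]; tauto.
  - pose proof (omega_pow_rev_not_has_least _ _ Hk HA).
    pose proof (omega_pow_rev_not_has_least _ _ Hk HB).
    split; [intros _; tauto | intros _; exact (iso_to_struct_iso _ _ _ _ HA HB)].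
Qed.

Lemma lex_square_has_least A : has_least (lex_square A) <-> has_least A.
Proof.
  split.
  - intros [p0 [Hp0 Hleast]]. destruct (npair_surj p0) as (a0 & b0 & ->).
    rewrite lex_square_dom in Hp0. destruct Hp0 as [Ha0 Hb0].
    exists a0. split; [exact Ha0 |]. intros a Ha Hne.
    assert (H : rel (lex_square A) (npair a0 b0) (npair a b0)).
    { apply Hleast; [apply lex_square_dom; auto | intros [E _]%npair_inj; auto]. }
    rewrite lex_square_rel in H. destruct H as [H | [E _]]; [exact H | congruence].
  - intros [a0 [Ha0 Hleast]]. exists (npair a0 a0). split; [apply lex_square_dom; auto |].
    intros p Hp Hne. destruct (npair_surj p) as (a & b & ->).
    rewrite lex_square_dom in Hp. destruct Hp as [Ha Hb].
    rewrite lex_square_rel. destruct (Nat.eq_dec a a0) as [-> | Hne'].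
    + right. split; [reflexivity |]. apply Hleast; auto.
    + left. auto.
Qed.

Lemma lex_square_struct_iso n A B :
  1 <= n -> class_omega_pow n A -> class_omega_pow n B ->
  struct_iso A B <-> struct_iso (lex_square A) (lex_square B).
Proof.
  intros Hn HA HB.
  rewrite (class_omega_pow_struct_iso n A B), (class_omega_pow_struct_iso (2 * n))
    by (auto using class_lex_square; lia).
  rewrite !lex_square_has_least. reflexivity.
Qed.

Theorem proposition6p1 (n : nat) :
  1 <= n ->
  comp_reducible (class_omega_pow n) (class_omega_pow (2 * n)).
Proof.
  intro Hn. exists lex_square_prog. split.
  - intros A HA. exists (lex_square A).
    split; [apply class_lex_square, HA | apply enum_apply_lex_square_prog_diagram].
  - intros A B A' B' HA HB HA' HB'.
    rewrite (lex_square_struct_iso n A B Hn HA HB).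
    apply struct_iso_same_diagram; intro phi;
      rewrite <- enum_apply_lex_square_prog_diagram; auto.
Qed.
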